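(* Let $\mathbf A$ be a finite algebra. If $\mathbf A$ has a nontrivial strongly abelian congruence, then $c^s_{\mathbf A}(n)\in 2^{\Omega(n^{1/k})}$ where $k=\lfloor\log_2|A|\rfloor$.
   Context: For a finite algebra $\mathbf A$, $c^s_{\mathbf A}(n)$ is the maximum number of surjective homomorphisms $\mathbf X\to\mathbf A$ over algebras $\mathbf X$ in the signature of $\mathbf A$ with at most $n$ elements. $\mathrm{Clo}_k(\mathbf A)$ is the set of $k$-ary term operations. A congruence $\alpha$ of $\mathbf A$ is strongly abelian if for every $k\ge1$, every $t\in\mathrm{Clo}_k(\mathbf A)$ and all $x_1,\dots,x_k,y_1,\dots,y_k,z_2,\dots,z_k\in A$ with $(x_i,y_i)\in\alpha$ for $1\le i\le k$ and $(y_i,z_i)\in\alpha$ for $2\le i\le k$, $t(x_1,\dots,x_k)=t(y_1,\dots,y_k)$ implies $t(x_1,z_2,\dots,z_k)=t(y_1,z_2,\dots,z_k)$. Nontrivial means different from the equality relation. *)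

From mathcomp Require Import all_boot.
From Stdlib Require Import ClassicalEpsilon.
From Stdlib Require Reals.

Set Implicit Arguments.
Unset Strict Implicit.
Unset Printing Implicit Defensive.

Record signature := Signature { symb : Type ; arity : symb -> nat }.

Definition ops (S : signature) (T : Type) : Type :=
  forall i : symb S, ('I_(arity i) -> T) -> T.

Definition decP (P : Prop) : bool :=
  if excluded_middle_informative P then true else false.

Definition is_hom (S : signature) (X Y : Type) (opX : ops S X) (opY : ops S Y)
  (f : X -> Y) : Prop :=
  forall (i : symb S) (a : 'I_(arity i) -> X), f (opX i a) = opY i (fun j => f (a j)).

Definition is_surj (X Y : Type) (f : X -> Y) : Prop := forall y, exists x, f x = y.

Definition nsurj (S : signature) (m : nat) (opX : ops S 'I_m)
  (A : finType) (opA : ops S A) : nat :=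
  #|[set f : {ffun 'I_m -> A} | decP (is_hom opX opA f /\ is_surj f)]|.

(* c^s_A(n): the maximum of the number of surjective homomorphisms X -> A over
   all algebras X of the signature with at most n elements (every such X is
   isomorphic to one with universe 'I_m, 1 <= m <= n).  The number is bounded
   by (max 1 |A|)^n, so the maximum is taken over N <= (max 1 |A|)^n. *)
Definition cs (S : signature) (A : finType) (opA : ops S A) (n : nat) : nat :=
  \max_(N < ((maxn 1 #|A|) ^ n).+1 |
        decP (exists m, 0 < m <= n /\ exists opX : ops S 'I_m, nsurj opX opA = N)) N.

Inductive term (S : signature) (V : Type) : Type :=
  | Var : V -> term S V
  | App : forall i : symb S, ('I_(arity i) -> term S V) -> term S V.

Fixpoint eval (S : signature) (T : Type) (o : ops S T) (V : Type) (v : V -> T)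
  (t : term S V) : T :=
  match t with
  | Var x => v x
  | App i ts => o i (fun j => eval o v (ts j))
  end.

Definition is_congruence (S : signature) (A : Type) (opA : ops S A)
  (alpha : A -> A -> Prop) : Prop :=
  [/\ (forall a, alpha a a), (forall a b, alpha a b -> alpha b a),
      (forall a b c, alpha a b -> alpha b c -> alpha a c) &
      (forall (i : symb S) (a b : 'I_(arity i) -> A),
          (forall j, alpha (a j) (b j)) -> alpha (opA i a) (opA i b))].

Definition nontrivial_rel (A : Type) (alpha : A -> A -> Prop) : Prop :=
  exists a b, alpha a b /\ a <> b.

(* Strongly abelian: for every k >= 1 (written k.+1, the first variable being
   ord0), every k-ary term operation t, and x, y, z with x_i alpha y_i for all i
   and y_i alpha z_i for i >= 2: t(x) = t(y) implies t(x1,z) = t(y1,z). *)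
Definition strongly_abelian (S : signature) (A : Type) (opA : ops S A)
  (alpha : A -> A -> Prop) : Prop :=
  is_congruence opA alpha /\
  forall (k : nat) (t : term S 'I_k.+1) (x y z : 'I_k.+1 -> A),
    (forall i, alpha (x i) (y i)) ->
    (forall i, i != ord0 -> alpha (y i) (z i)) ->
    eval opA x t = eval opA y t ->
    eval opA (fun i => if i == ord0 then x ord0 else z i) t =
    eval opA (fun i => if i == ord0 then y ord0 else z i) t.

From Pilot Require Import Defs.
From Stdlib Require Import Reals Lra FunctionalExtensionality ClassicalEpsilon.
From mathcomp Require Import all_boot.

Set Implicit Arguments.
Unset Strict Implicit.
Unset Printing Implicit Defensive.

(* Let alpha be strongly abelian and a <> b with a alpha b.  For each m, the
   functions {0,1}^m -> A obtained by evaluating terms at the constants of A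
   and at the m coordinate tuples s |-> (if s_i then b else a) form an algebra
   X_m, whose 2^m evaluation maps are pairwise distinct surjective
   homomorphisms onto A.  Strong abelianness makes every member of X_m
   injective in the coordinates it depends on, so it depends on at most
   k = floor(log2 |A|) of them; hence |X_m| <= (m+1)^k |A|^(2^k).  Taking m as
   large as this bound allows for a given n yields c^s_A(n) >= 2^m, and m grows
   like n^(1/k). *)

Lemma decPP (P : Prop) : reflect P (Defs.decP P).
Proof.
by rewrite /Defs.decP; case: (excluded_middle_informative P) => HP; constructor.
Qed.

Fixpoint term_map (S : signature) (V W : Type) (g : V -> W) (t : term S V) :
    term S W :=
  match t with
  | Var x => Var S (g x)
  | App i ts => App (fun j => term_map g (ts j))
  end.

Lemma eval_term_map (S : signature) (T : Type) (o : ops S T) (V W : Type)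
    (g : V -> W) (v : W -> T) (t : term S V) :
  eval o v (term_map g t) = eval o (fun x => v (g x)) t.
Proof.
elim: t => [x|i ts IH] //=.
by congr (o i); apply: functional_extensionality => j; apply: IH.
Qed.

Section RelabelVariables.

Variables (V : finType) (v0 : V).

Definition relabel (w : V) : 'I_#|V|.+1 :=
  if w == v0 then ord0 else lift ord0 (enum_rank w).

Definition unrelabel (T : Type) (u : V -> T) (r : 'I_#|V|.+1) : T :=
  if unlift ord0 r is Some r' then u (enum_val r') else u v0.

Lemma unrelabelK (T : Type) (u : V -> T) (w : V) : unrelabel u (relabel w) = u w.
Proof.
rewrite /unrelabel /relabel; case: eqP => [->|_]; first by rewrite unlift_none.
by rewrite liftK enum_rankK.
Qed.

Lemma relabel_eq0 (w : V) : (relabel w == ord0) = (w == v0).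
Proof.
rewrite /relabel; case: ifP => _; first exact: eqxx.
by apply/negbTE; rewrite eq_sym neq_lift.
Qed.

End RelabelVariables.

Lemma strongly_abelian_vars (S : signature) (A : Type) (opA : ops S A)
    (alpha : A -> A -> Prop) (V : finType) (v0 : V) (t : term S V)
    (x y z : V -> A) :
  strongly_abelian opA alpha ->
  (forall w, alpha (x w) (y w)) -> (forall w, alpha (y w) (z w)) ->
  eval opA x t = eval opA y t ->
  eval opA (fun w => if w == v0 then x v0 else z w) t =
  eval opA (fun w => if w == v0 then y v0 else z w) t.
Proof.
move=> [_ SA] xy yz txy.
have unrelabel_rel u1 u2 : (forall w, alpha (u1 w) (u2 w)) ->
    forall r, alpha (unrelabel v0 u1 r) (unrelabel v0 u2 r).
  by move=> u12 r; rewrite /unrelabel; case: unlift.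
have evalK u : eval opA (unrelabel v0 u) (term_map (relabel v0) t) = eval opA u t.
  rewrite eval_term_map; congr (eval opA _ t).
  by apply: functional_extensionality => w; apply: unrelabelK.
have := SA _ (term_map (relabel v0) t) _ _ (unrelabel v0 z)
  (unrelabel_rel _ _ xy) (fun r _ => unrelabel_rel _ _ yz r).
rewrite !evalK => /(_ txy); rewrite !eval_term_map.
suff mixE u : (fun w => if relabel v0 w == ord0 then unrelabel v0 u ord0
                        else unrelabel v0 z (relabel v0 w)) =
              (fun w => if w == v0 then u v0 else z w) by rewrite !mixE.
apply: functional_extensionality => w.
by rewrite relabel_eq0 unrelabelK /unrelabel unlift_none.
Qed.

Section BooleanCube.

Variables (A : finType) (m : nat).

Local Notation cube := {ffun 'I_m -> bool}.

Definition set_coord (s : cube) (i : 'I_m) (c : bool) : cube :=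
  [ffun j => if j == i then c else s j].

Definition essential (F : {ffun cube -> A}) : {set 'I_m} :=
  [set i | [exists s, F s != F (set_coord s i (~~ s i))]].

Lemma set_coord_id (s : cube) (i : 'I_m) : set_coord s i (s i) = s.
Proof. by apply/ffunP => j; rewrite ffunE; case: eqP => [->|]. Qed.

Lemma set_coord_inessential (F : {ffun cube -> A}) (i : 'I_m) :
  i \notin essential F -> forall s c, F (set_coord s i c) = F s.
Proof.
rewrite inE negb_exists => /forallP Fi s c.
have [->|/negPf c_neq] := eqVneq c (s i); first by rewrite set_coord_id.
have -> : c = ~~ s i by move: c_neq; case: c; case: (s i).
by apply/eqP; rewrite eq_sym -[_ == _]negbK Fi.
Qed.

Lemma eq_on_essential (F : {ffun cube -> A}) (s s' : cube) :
  {in essential F, s =1 s'} -> F s = F s'.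
Proof.
move=> ess_eq.
pose mix (L : seq 'I_m) : cube := [ffun j => if j \in L then s' j else s j].
have <- : mix (enum 'I_m) = s' by apply/ffunP => j; rewrite ffunE mem_enum.
elim: (enum 'I_m) => [|i L IH]; first by congr (F _); apply/ffunP => j; rewrite ffunE.
have -> : mix (i :: L) = set_coord (mix L) i (s' i).
  by apply/ffunP => j; rewrite !ffunE in_cons; case: eqP => [->|].
rewrite {1}IH; have [Fi|/set_coord_inessential -> //] := boolP (i \in essential F).
have -> : s' i = mix L i by rewrite ffunE; case: ifP => // _; rewrite ess_eq.
by rewrite set_coord_id.
Qed.

(* A function depending on at most k coordinates is encoded by the list of
   those coordinates, padded with [None], together with its restriction to
   {0,1}^k. *)
Definition pad_enum (k : nat) (J : {set 'I_m}) : {ffun 'I_k -> option 'I_m} :=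
  [ffun j : 'I_k => nth None [seq Some i | i <- enum J] j].

Definition restrict (k : nat) (e : {ffun 'I_k -> option 'I_m}) (s : cube) :
    {ffun 'I_k -> bool} :=
  [ffun j => if e j is Some i then s i else false].

Definition extend (k : nat) (e : {ffun 'I_k -> option 'I_m})
    (c : {ffun 'I_k -> bool}) : cube :=
  [ffun i => [exists j, (e j == Some i) && c j]].

Definition compress (k : nat) (F : {ffun cube -> A}) :=
  (pad_enum k (essential F), [ffun c => F (extend (pad_enum k (essential F)) c)]).

Lemma pad_enum_cover (k : nat) (J : {set 'I_m}) (i : 'I_m) :
  #|J| <= k -> i \in J -> exists j, pad_enum k J j = Some i.
Proof.
move=> J_le iJ.
have i_idx : index i (enum J) < k.
  by apply: leq_trans J_le; rewrite cardE index_mem mem_enum.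
exists (Ordinal i_idx); rewrite ffunE /= (nth_map i) ?index_mem ?mem_enum //.
by rewrite nth_index ?mem_enum.
Qed.

Lemma extend_restrict (k : nat) (e : {ffun 'I_k -> option 'I_m}) (s : cube)
    (i : 'I_m) :
  (exists j, e j = Some i) -> extend e (restrict e s) i = s i.
Proof.
move=> [j0 ej0]; rewrite ffunE.
have [si|nsi] := boolP (s i).
  by apply/existsP; exists j0; rewrite ej0 eqxx ffunE ej0.
apply/negbTE; rewrite negb_exists; apply/forallP => j; rewrite ffunE.
by case: (e j) => [i'|] //=; case: eqP => // -[->]; rewrite (negbTE nsi).
Qed.

Lemma compressK (k : nat) (F : {ffun cube -> A}) (s : cube) :
  #|essential F| <= k -> F s = (compress k F).2 (restrict (compress k F).1 s).
Proof.
move=> ess_le; rewrite /= ffunE; apply: eq_on_essential => i iF.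
by rewrite extend_restrict //; apply: pad_enum_cover.
Qed.

Lemma card_few_essential (k : nat) :
  #|[set F : {ffun cube -> A} | #|essential F| <= k]| <= m.+1 ^ k * #|A| ^ 2 ^ k.
Proof.
rewrite -(card_in_imset (f := compress k)).
  apply: leq_trans (max_card _) _.
  by rewrite card_prod !card_ffun card_option !card_ord card_bool.
move=> F F'; rewrite !inE => F_le F'_le eqFF'; apply/ffunP => s.
by rewrite (compressK s F_le) (compressK s F'_le) eqFF'.
Qed.

End BooleanCube.

Section TermFunctions.

Variables (S : signature) (A : finType) (opA : ops S A) (a b : A) (m : nat).
Arguments opA : clear implicits.

Local Notation cube := {ffun 'I_m -> bool}.

Definition coord_val (s : cube) (v : A + 'I_m) : A :=
  match v with inl c => c | inr i => if s i then b else a end.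

Definition term_fun (t : term S (A + 'I_m)) : {ffun cube -> A} :=
  [ffun s => eval opA (coord_val s) t].

Definition term_funs : {set {ffun cube -> A}} :=
  [set F | Defs.decP (exists t, term_fun t = F)].

Definition ops_cube : ops S {ffun cube -> A} :=
  fun i u => [ffun s => opA i (fun j => u j s)].
Arguments ops_cube : clear implicits.

Lemma term_funsP (F : {ffun cube -> A}) :
  reflect (exists t, term_fun t = F) (F \in term_funs).
Proof. by rewrite inE; apply: decPP. Qed.

Lemma term_fun_var (v : A + 'I_m) : term_fun (Var S v) \in term_funs.
Proof. by apply/term_funsP; exists (Var S v). Qed.

Lemma term_funs_closed (i : symb S) (u : 'I_(arity i) -> {ffun cube -> A}) :
  (forall j, u j \in term_funs) -> ops_cube i u \in term_funs.
Proof.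
move=> u_in; have /all_sig [ts ts_u] j : {t | term_fun t = u j}.
  by apply: constructive_indefinite_description; apply/term_funsP.
apply/term_funsP; exists (App ts); apply/ffunP => s; rewrite !ffunE /=.
by congr (opA i); apply: functional_extensionality => j; rewrite -ts_u ffunE.
Qed.

Lemma coord_val_set (s : cube) (i : 'I_m) (c : bool) :
  (fun w => if w == inr i then (if c then b else a) else coord_val s w) =
  coord_val (set_coord s i c).
Proof.
apply: functional_extensionality => -[c'|j] //=.
by rewrite !ffunE; case: (j =P i) => [->|ne]; [rewrite eqxx | case: eqP => // -[]].
Qed.

Section StronglyAbelian.

Variable alpha : A -> A -> Prop.
Hypotheses (alpha_SA : strongly_abelian opA alpha) (alpha_ab : alpha a b).

Lemma alpha_coord_val (s1 s2 : cube) (w : A + 'I_m) :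
  alpha (coord_val s1 w) (coord_val s2 w).
Proof.
have [[alpha_refl alpha_sym _ _] _] := alpha_SA.
by case: w => [c|j] //=; case: (s1 j); case: (s2 j); auto.
Qed.

Lemma term_fun_inj_essential (t : term S (A + 'I_m)) (s s' : cube) (i : 'I_m) :
  term_fun t s = term_fun t s' -> i \in essential (term_fun t) -> s i = s' i.
Proof.
move=> eq_ss'; rewrite inE => /existsP [s0]; apply: contraNeq => ss'_neq.
have eq_set : term_fun t (set_coord s0 i (s i)) = term_fun t (set_coord s0 i (s' i)).
  move: eq_ss'; rewrite !ffunE -!coord_val_set => eq_ss'.
  have := strongly_abelian_vars (inr i) (z := coord_val s0) alpha_SA
    (alpha_coord_val s s') (alpha_coord_val s' s0) eq_ss'.
  by [].
have [[si s'i]|[si s'i]] :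
    s i = s0 i /\ s' i = ~~ s0 i \/ s i = ~~ s0 i /\ s' i = s0 i.
  by move: ss'_neq; case: (s i); case: (s' i); case: (s0 i); auto.
- by move: eq_set; rewrite si s'i set_coord_id => ->.
- by move: eq_set; rewrite si s'i set_coord_id => <-.
Qed.

(* Distinct subsets of the essential coordinates give distinct values. *)
Lemma exp2_card_essential (F : {ffun cube -> A}) :
  F \in term_funs -> 2 ^ #|essential F| <= #|A|.
Proof.
move=> /term_funsP [t <-].
pose indicator (D : {set 'I_m}) : cube := [ffun i => i \in D].
rewrite -card_powerset -(card_in_imset (f := fun D => term_fun t (indicator D))).
  exact: max_card.
move=> D D'; rewrite !powersetE => /subsetP DF /subsetP D'F eqDD'.
apply/setP => i; have [iF|niF] := boolP (i \in essential (term_fun t)).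
  by have := term_fun_inj_essential eqDD' iF; rewrite !ffunE.
by apply/idP/idP => [/DF|/D'F]; rewrite (negbTE niF).
Qed.

Lemma card_term_funs :
  #|term_funs| <= m.+1 ^ trunc_log 2 #|A| * #|A| ^ 2 ^ trunc_log 2 #|A|.
Proof.
apply: leq_trans (card_few_essential A m _); apply/subset_leq_card/subsetP => F XF.
by rewrite inE; apply: trunc_log_max => //; apply: exp2_card_essential.
Qed.

End StronglyAbelian.

Lemma nsurj_term_funs :
  a != b -> exists opX : ops S 'I_#|term_funs|, 2 ^ m <= nsurj opX opA.
Proof.
move=> a_neq_b; have X0 := term_fun_var (inl a).
pose opX : ops S 'I_#|term_funs| :=
  fun i r => enum_rank_in X0 (ops_cube i (fun j => enum_val (r j))).
exists opX.
pose eval_at (s : cube) : {ffun 'I_#|term_funs| -> A} :=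
  [ffun r => (enum_val r : {ffun cube -> A}) s].
have eval_atE s F : F \in term_funs -> eval_at s (enum_rank_in X0 F) = F s.
  by move=> XF; rewrite ffunE enum_rankK_in.
have eval_at_inj : injective eval_at.
  move=> s1 s2 /ffunP /(_ (enum_rank_in X0 (term_fun (Var S (inr _))))) eq12.
  apply/ffunP => i; move: (eq12 i); rewrite !eval_atE ?term_fun_var // !ffunE /=.
  by case: (s1 i); case: (s2 i) => // ab; rewrite ab eqxx in a_neq_b.
have eval_at_surj_hom s : is_hom opX opA (eval_at s) /\ is_surj (eval_at s).
  split=> [i r|c].
    rewrite eval_atE; last by apply: term_funs_closed => j; apply: enum_valP.
    by rewrite ffunE; congr (opA i); apply: functional_extensionality => j; rewrite ffunE.
  exists (enum_rank_in X0 (term_fun (Var S (inl c)))).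
  by rewrite eval_atE ?term_fun_var ?ffunE.
have -> : 2 ^ m = #|eval_at @: [set: cube]|.
  by rewrite card_imset // cardsT card_ffun card_bool card_ord.
apply/subset_leq_card/subsetP => _ /imsetP [s _ ->].
by rewrite inE; apply/decPP/eval_at_surj_hom.
Qed.

End TermFunctions.

Lemma cs_ge_nsurj (S : signature) (A : finType) (opA : ops S A) (N n : nat)
    (opX : ops S 'I_N) :
  0 < N <= n -> nsurj opX opA <= cs opA n.
Proof.
move=> /andP [N_gt0 N_le].
have nsurj_lt : nsurj opX opA < (maxn 1 #|A| ^ n).+1.
  rewrite ltnS; apply: leq_trans (max_card _) _; rewrite card_ffun card_ord.
  apply: (@leq_trans (maxn 1 #|A| ^ N)); first by rewrite leq_exp2r ?leq_maxr.
  by rewrite leq_pexp2l // leq_max.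
apply: (leq_bigmax_cond (F := fun N' : 'I_(maxn 1 #|A| ^ n).+1 => nat_of_ord N')
  (Ordinal nsurj_lt)).
by apply/decPP; exists N; split; [rewrite N_gt0 | exists opX].
Qed.

Lemma exists_pow_bracket (C k n : nat) :
  0 < C -> 0 < k -> C <= n -> exists m, C * m.+1 ^ k <= n < C * m.+2 ^ k.
Proof.
move=> C_gt0 k_gt0 C_le.
have ex_big : exists j, n < C * j.+1 ^ k.
  exists n; apply: leq_trans (leq_pmull _ C_gt0).
  by rewrite -{1}(expn1 n.+1) leq_pexp2l.
case: (ex_minnP ex_big) => -[|m] m_big m_min.
  by rewrite exp1n muln1 ltnNge C_le in m_big.
by exists m; rewrite m_big andbT leqNgt; apply/negP => /m_min; rewrite ltnn.
Qed.

Local Open Scope R_scope.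

Lemma INR_expn (p q : nat) : INR (p ^ q)%N = INR p ^ q.
Proof. by elim: q => [|q IH]; rewrite ?expn0 // expnS mult_INR IH. Qed.

Lemma INR_pos (p : nat) : (0 < p)%N -> 0 < INR p.
Proof. by move=> /ltP; apply: lt_0_INR. Qed.

Lemma Rpower_inv_le (x y : R) (k : nat) :
  (0 < k)%N -> 0 < x -> 0 < y -> x <= y ^ k -> Rpower x (/ INR k) <= y.
Proof.
move=> /INR_pos k_gt0 x_gt0 y_gt0; rewrite -Rpower_pow // => x_le.
have := Rle_Rpower_l _ _ _ (Rlt_le _ _ (Rinv_0_lt_compat _ k_gt0)) (conj x_gt0 x_le).
by rewrite Rpower_mult Rinv_r ?Rpower_1 //; apply: Rgt_not_eq.
Qed.

Lemma Rpower2_le_INR (m p : nat) : (2 ^ m <= p)%N -> Rpower (INR 2) (INR m) <= INR p.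
Proof.
move=> /leP le2p; rewrite Rpower_pow; last by rewrite /=; lra.
by rewrite -INR_expn; apply: le_INR.
Qed.

(* n^(1/k) <= C (m + 2) <= 3 C m, since m >= 1. *)
Lemma Rpower2_root_le (C k m n : nat) :
  (0 < C)%N -> (0 < k)%N -> (0 < n)%N -> (0 < m)%N -> (n <= (C * m.+2) ^ k)%N ->
  Rpower (INR 2) (/ INR (3 * C) * Rpower (INR n) (/ INR k)) <= Rpower (INR 2) (INR m).
Proof.
move=> /INR_pos C_gt0 k_gt0 /INR_pos n_gt0 m_gt0 /leP /le_INR.
rewrite INR_expn mult_INR !S_INR => n_le.
have m_ge1 : 1 <= INR m by apply: (le_INR 1); apply/leP.
have root_le : Rpower (INR n) (/ INR k) <= INR C * (INR m + 1 + 1).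
  by apply: Rpower_inv_le => //; nra.
apply: Rle_Rpower; first by rewrite /=; lra.
rewrite mult_INR; apply: (Rle_trans _ (/ (INR 3 * INR C) * (INR C * (INR m + 1 + 1)))).
  by apply: Rmult_le_compat_l => //; apply/Rlt_le/Rinv_0_lt_compat; rewrite /=; nra.
by rewrite /=; field_simplify; lra.
Qed.

Local Close Scope R_scope.

Theorem corollary3p5 (S : signature) (A : finType) (opA : ops S A) :
  (exists alpha : A -> A -> Prop,
      strongly_abelian opA alpha /\ nontrivial_rel alpha) ->
  let k := trunc_log 2 #|A| in
  exists (c : Reals.Rdefinitions.R) (N0 : nat),
    Reals.Rdefinitions.Rlt Reals.Rdefinitions.R0 c /\
    forall n : nat, N0 <= n ->
      Reals.Rdefinitions.Rle
        (Reals.Rpower.Rpower (Reals.Raxioms.INR 2)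
           (Reals.Rdefinitions.Rmult c
              (Reals.Rpower.Rpower (Reals.Raxioms.INR n)
                 (Reals.Rdefinitions.Rinv (Reals.Raxioms.INR k)))))
        (Reals.Raxioms.INR (cs opA n)).
Proof.
move=> [alpha [alpha_SA [a [b [alpha_ab /eqP a_neq_b]]]]] k.
have A_gt1 : 1 < #|A| by apply/card_gt1P; exists a, b.
have k_gt0 : 0 < k by rewrite trunc_log_gt0 A_gt1.
pose C := #|A| ^ 2 ^ k.
have C_gt0 : 0 < C by rewrite expn_gt0 ltnW.
exists (Rinv (INR (3 * C))), (C * 2 ^ k); split.
  by apply/Rinv_0_lt_compat/INR_pos; rewrite muln_gt0.
move=> n n_ge.
have C_le : C <= n by apply: leq_trans n_ge; rewrite leq_pmulr ?expn_gt0.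
have [m /andP [bracket_le bracket_gt]] := exists_pow_bracket C_gt0 k_gt0 C_le.
have m_gt0 : 0 < m by case: m {bracket_le} bracket_gt; rewrite // ltnNge n_ge.
have [opX two_m_le] := nsurj_term_funs opA m a_neq_b.
have X_gt0 : 0 < #|term_funs opA a b m|.
  by apply/card_gt0P; exists (term_fun opA a b (Var S (inl a))); apply: term_fun_var.
have X_le : #|term_funs opA a b m| <= n.
  by apply: leq_trans (card_term_funs m alpha_SA alpha_ab) _; rewrite mulnC.
have cs_ge : 2 ^ m <= cs opA n.
  by apply: leq_trans two_m_le _; apply: cs_ge_nsurj; rewrite X_gt0 X_le.
have n_le : n <= (C * m.+2) ^ k.
  rewrite expnMn; apply: leq_trans (ltnW bracket_gt) _.
  by rewrite leq_mul2r -{1}(expn1 C) leq_pexp2l ?orbT.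
exact: Rle_trans (Rpower2_root_le C_gt0 k_gt0 (leq_trans C_gt0 C_le) m_gt0 n_le)
  (Rpower2_le_INR cs_ge).
Qed.
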